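(* Under Assumptions 1 and 2, the dual variables generated by the accurate-gradient algorithm satisfy $\|y_i(t)\|\le\sqrt n\,\kappa_2$ for all $i\in\mathcal V$ and all $t\in\{1,\dots,T\}$.
   Context: Network: Let $n\ge2$, $\mathcal V=\{1,\dots,n\}$. For $t=0,1,2,\dots$, $\mathcal G(t)=(\mathcal V,\mathcal E(t),A(t))$ is a digraph with weight matrix $A(t)=(a_{ij}(t))_{n\times n}$, where for some $\gamma>0$, $\gamma\le a_{ij}(t)\le1$ if $(j,i)\in\mathcal E(t)$ and $a_{ij}(t)=0$ otherwise; $\mathcal N_i(t)=\{j:(j,i)\in\mathcal E(t)\}$ and $i\in\mathcal N_i(t)$. Assumption 1: there is an integer $U>0$ such that for every $t\ge0$ the digraph $(\mathcal V,\bigcup_{k=tU}^{(t+1)U-1}\mathcal E(k))$ is strongly connected, and $A(t)1_n=A(t)^T1_n=1_n$ for all $t$. Problem: $\Omega\subset\mathbb R^m$ is convex; for each $i\in\mathcal V$ and $t\ge0$, $f_i^t:\Omega\times\Omega\to\mathbb R$ and $g_i^t=(g_{i1}^t,\dots,g_{ih}^t)^T:\Omega\to\mathbb R^h$; $\mathcal X^t=\{x\in\Omega:\sum_ig_i^t(x)\le0\}$; $\nabla_2$ is the gradient in the second argument; $\nabla g_i^t(x)=[\nabla g_{i1}^t(x),\dots,\nabla g_{ih}^t(x)]\in\mathbb R^{m\times h}$. Assumption 2: (i) $f_i^t(x,\cdot)$ convex, each $g_{ik}^t$ convex (differentiable); (ii) $\mathcal X^t\neq\emptyset$, $\Omega$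 compact with $\|x\|\le\kappa$ on $\Omega$; (iii) $\|\nabla_2f_i^t(x,y)\|\le\kappa_1$, $\|g_i^t(x)\|\le\kappa_2$, $\|\nabla g_{ik}^t(x)\|\le\kappa_3$ on $\Omega$. Algorithm: $\phi:\mathbb R^m\to\mathbb R$ differentiable and $\mu$-strongly convex, $\mathcal D_\phi(x,y)=\phi(x)-\phi(y)-\langle\nabla\phi(y),x-y\rangle$. Non-increasing step sizes $\zeta_t,\eta_t\in(0,1]$ with $\zeta_t\le\eta_t$; $x_i(0)\in\Omega$, $y_i(0)=0\in\mathbb R^h$; for $t\ge0$: $z_i(t)=\sum_{j\in\mathcal N_i(t)}a_{ij}(t)x_j(t)$; $x_i(t+1)=\arg\min_{x\in\Omega}\{\mathcal D_\phi(x,z_i(t))+\langle\zeta_t\nabla_2f_i^t(x_i(t),x_i(t))+\eta_t\nabla g_i^t(x_i(t))y_i(t),x\rangle\}$; $y_i(t+1)=[(1-\eta_t)\sum_{j\in\mathcal N_i(t)}a_{ij}(t)y_j(t)+\eta_tg_i^t(x_i(t))]_+$ (componentwise positive part). $T$ is the (finite) time horizon. *)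

From HB Require Import structures.
From mathcomp Require Import all_boot all_order all_algebra.
From mathcomp Require Import all_classical all_reals all_analysis.
Set Implicit Arguments. Unset Strict Implicit. Unset Printing Implicit Defensive.
Import Order.TTheory GRing.Theory Num.Theory.
Import numFieldNormedType.Exports.
Local Open Scope classical_set_scope.
Local Open Scope ring_scope.

Section Defs.
Variable R : realType.

Definition dotv k (u v : 'rV[R]_k) : R := \sum_(l < k) u 0 l * v 0 l.
Definition enorm k (v : 'rV[R]_k) : R := Num.sqrt (dotv v v).

Definition pospart k (v : 'rV[R]_k) : 'rV[R]_k := map_mx (fun a => Num.max a 0) v.

(* E t j i  <->  (j,i) \in E(t), i.e. an edge from j to i; A t i j = a_ij(t). *)
Definition network_assumption (n : nat) (gamma : R) (U : nat)
    (E : nat -> rel 'I_n) (A : nat -> 'M[R]_n) : Prop :=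
  0 < gamma /\
      (forall t i j, E t j i -> gamma <= A t i j <= 1) /\
      (forall t i j, ~~ E t j i -> A t i j = 0) /\
      (forall t i, E t i i) /\
      (0 < U)%N /\
      (forall t (i j : 'I_n),
          connect (fun a b => [exists k : 'I_U, E (t * U + k)%N a b]) i j) /\
      (forall t, (forall i, \sum_(j < n) A t i j = 1) /\
                 (forall j, \sum_(i < n) A t i j = 1)).

Definition convex_set m (Om : set 'rV[R]_m) : Prop :=
  forall x y, Om x -> Om y -> forall l : R, 0 <= l <= 1 ->
    Om (l *: x + (1 - l) *: y).

Definition convex_on m (Om : set 'rV[R]_m) (F : 'rV[R]_m -> R) : Prop :=
  forall x y, Om x -> Om y -> forall l : R, 0 <= l <= 1 ->
    F (l *: x + (1 - l) *: y) <= l * F x + (1 - l) * F y.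

Definition is_gradient m (F : 'rV[R]_m -> R) (x G : 'rV[R]_m) : Prop :=
  differentiable F x /\ forall v, 'd F x v = dotv G v.

(* f t i = f_i^t, grad2f t i x y = \nabla_2 f_i^t(x,y);
   g t i = g_i^t : R^m -> R^h, gradg t i x = \nabla g_i^t(x) (m x h, column k = \nabla g_ik^t(x)). *)
Definition problem_assumption (n m h : nat) (Om : set 'rV[R]_m)
    (f : nat -> 'I_n -> 'rV[R]_m -> 'rV[R]_m -> R)
    (grad2f : nat -> 'I_n -> 'rV[R]_m -> 'rV[R]_m -> 'rV[R]_m)
    (g : nat -> 'I_n -> 'rV[R]_m -> 'rV[R]_h)
    (gradg : nat -> 'I_n -> 'rV[R]_m -> 'M[R]_(m, h))
    (kappa kappa1 kappa2 kappa3 : R) : Prop :=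
  convex_set Om /\
      (forall t i x, Om x -> convex_on Om (f t i x)) /\
      (forall t i (k : 'I_h), convex_on Om (fun x => g t i x 0 k)) /\
      (forall t i x y, Om x -> Om y -> is_gradient (f t i x) y (grad2f t i x y)) /\
      (forall t i (k : 'I_h) x, Om x ->
          is_gradient (fun z => g t i z 0 k) x (col k (gradg t i x))^T) /\
      (forall t, exists2 x, Om x & forall k : 'I_h, \sum_(i < n) g t i x 0 k <= 0) /\
      compact Om /\
      (forall x, Om x -> enorm x <= kappa) /\
      (forall t i x y, Om x -> Om y -> enorm (grad2f t i x y) <= kappa1) /\
      (forall t i x, Om x -> enorm (g t i x) <= kappa2) /\
      (forall t i (k : 'I_h) x, Om x -> enorm (col k (gradg t i x))^T <= kappa3).

Definition mirror_map m (phi : 'rV[R]_m -> R) (gradphi : 'rV[R]_m -> 'rV[R]_m) (mu : R) : Prop :=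
  0 < mu /\
  (forall x, is_gradient phi x (gradphi x)) /\
  (forall x y (l : R), 0 <= l <= 1 ->
     phi (l *: x + (1 - l) *: y) <=
       l * phi x + (1 - l) * phi y - mu / 2 * l * (1 - l) * enorm (x - y) ^+ 2).

Definition bregman m (phi : 'rV[R]_m -> R) (gradphi : 'rV[R]_m -> 'rV[R]_m)
    (x y : 'rV[R]_m) : R :=
  phi x - phi y - dotv (gradphi y) (x - y).

Definition step_sizes (zeta eta : nat -> R) : Prop :=
  (forall t, 0 < zeta t <= 1) /\ (forall t, 0 < eta t <= 1) /\
  (forall t, zeta t <= eta t) /\
  (forall t, zeta t.+1 <= zeta t) /\ (forall t, eta t.+1 <= eta t).

Definition algorithm_run (n m h : nat) (Om : set 'rV[R]_m)
    (E : nat -> rel 'I_n) (A : nat -> 'M[R]_n)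
    (grad2f : nat -> 'I_n -> 'rV[R]_m -> 'rV[R]_m -> 'rV[R]_m)
    (g : nat -> 'I_n -> 'rV[R]_m -> 'rV[R]_h)
    (gradg : nat -> 'I_n -> 'rV[R]_m -> 'M[R]_(m, h))
    (phi : 'rV[R]_m -> R) (gradphi : 'rV[R]_m -> 'rV[R]_m)
    (zeta eta : nat -> R)
    (x : nat -> 'I_n -> 'rV[R]_m) (y : nat -> 'I_n -> 'rV[R]_h) : Prop :=
  (forall i, Om (x 0%N i)) /\
      (forall i, y 0%N i = 0) /\
      (forall t i,
         let z := \sum_(j < n | E t j i) A t i j *: x t j in
         let d := zeta t *: grad2f t i (x t i) (x t i)
                  + eta t *: (y t i *m (gradg t i (x t i))^T) in
         Om (x t.+1 i) /\
         forall w, Om w ->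
           bregman phi gradphi (x t.+1 i) z + dotv d (x t.+1 i)
           <= bregman phi gradphi w z + dotv d w) /\
      (forall t i,
         y t.+1 i = pospart ((1 - eta t) *: (\sum_(j < n | E t j i) A t i j *: y t j)
                             + eta t *: g t i (x t i))).

End Defs.

From HB Require Import structures.
From mathcomp Require Import all_boot all_order all_algebra.
From mathcomp Require Import all_classical all_reals all_analysis.
From mathcomp Require Import ring.
Set Implicit Arguments.
Import Order.TTheory GRing.Theory Num.Theory.
Local Open Scope classical_set_scope.
Local Open Scope ring_scope.

(* The update makes y_i(t+1) the positive part of a convex combination of the
   neighbours' y_j(t) and of g_i^t(x_i(t)).  The squared Euclidean norm is
   convex and does not grow under the positive part, so the ball of radius
   kappa2, which contains y_i(0) = 0 and every g_i^t(x_i(t)), is invariant.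
   Hence ||y_i(t)|| <= kappa2 <= sqrt n * kappa2 for all t. *)

Section SquaredNorm.
Context {R : realType}.

Lemma sqr_convex_comb_le (I : finType) (w a : I -> R) :
  (forall i, 0 <= w i) -> \sum_i w i = 1 ->
  (\sum_i w i * a i) ^+ 2 <= \sum_i w i * a i ^+ 2.
Proof.
move=> w_ge0 w_sum1; set M := \sum_i w i * a i.
have variance : \sum_i w i * (a i - M) ^+ 2 = \sum_i w i * a i ^+ 2 - M ^+ 2.
  rewrite (eq_bigr (fun i => w i * a i ^+ 2 - M *+ 2 * (w i * a i) + M ^+ 2 * w i));
    last by move=> i _; ring.
  by rewrite big_split /= sumrB -!mulr_sumr w_sum1 -/M; ring.
rewrite -subr_ge0 -variance.
by apply: sumr_ge0 => i _; rewrite mulr_ge0 ?sqr_ge0.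
Qed.

Context {k : nat}.
Implicit Types u v : 'rV[R]_k.

Lemma dotv_convex_comb_le (I : finType) (w : I -> R) (v : I -> 'rV[R]_k) :
  (forall i, 0 <= w i) -> \sum_i w i = 1 ->
  dotv (\sum_i w i *: v i) (\sum_i w i *: v i) <= \sum_i w i * dotv (v i) (v i).
Proof.
move=> w_ge0 w_sum1.
have coord l : (\sum_i w i *: v i) 0 l = \sum_i w i * v i 0 l.
  by rewrite summxE; apply: eq_bigr => i _; rewrite mxE.
rewrite /dotv; under eq_bigr => l _ do rewrite coord -expr2.
under [X in _ <= X]eq_bigr => i _ do rewrite mulr_sumr.
rewrite exchange_big /=; apply: ler_sum => l _.
under [X in _ <= X]eq_bigr => i _ do rewrite -expr2.
exact: sqr_convex_comb_le.
Qed.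

Lemma dotv_convex_comb_bound (I : finType) (w : I -> R) (v : I -> 'rV[R]_k) (K : R) :
  (forall i, 0 <= w i) -> \sum_i w i = 1 -> (forall i, dotv (v i) (v i) <= K) ->
  dotv (\sum_i w i *: v i) (\sum_i w i *: v i) <= K.
Proof.
move=> w_ge0 w_sum1 v_le; apply: le_trans (dotv_convex_comb_le w v w_ge0 w_sum1) _.
apply: le_trans (_ : \sum_i w i * K <= _).
  by apply: ler_sum => i _; rewrite ler_wpM2l.
by rewrite -mulr_suml w_sum1 mul1r.
Qed.

Lemma dotv_convex2_bound u v (e K : R) :
  0 <= e <= 1 -> dotv u u <= K -> dotv v v <= K ->
  dotv ((1 - e) *: u + e *: v) ((1 - e) *: u + e *: v) <= K.
Proof.
move=> /andP[e_ge0 e_le1] u_le v_le.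
have := @dotv_convex_comb_bound _ (fun b => if b then 1 - e else e)
  (fun b => if b then u else v) K.
rewrite !big_bool /=; apply; first by case; rewrite ?subr_ge0.
  by rewrite subrK.
by case.
Qed.

Lemma dotv_pospart_le v : dotv (pospart v) (pospart v) <= dotv v v.
Proof.
apply: ler_sum => l _; rewrite !mxE.
by case: (leP (v 0 l) 0) => // _; rewrite mulr0 -expr2 sqr_ge0.
Qed.

Lemma enorm_le_sqr v (c : R) : 0 <= c -> (enorm v <= c) = (dotv v v <= c ^+ 2).
Proof.
by move=> c_ge0; rewrite /enorm -{1}(ger0_norm c_ge0) -sqrtr_sqr ler_sqrt ?sqr_ge0.
Qed.

End SquaredNorm.

Section DualIterates.
Variables (R : realType) (n m h : nat) (gamma : R) (U : nat)
  (E : nat -> rel 'I_n) (A : nat -> 'M[R]_n) (Om : set 'rV[R]_m)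
  (f : nat -> 'I_n -> 'rV[R]_m -> 'rV[R]_m -> R)
  (grad2f : nat -> 'I_n -> 'rV[R]_m -> 'rV[R]_m -> 'rV[R]_m)
  (g : nat -> 'I_n -> 'rV[R]_m -> 'rV[R]_h)
  (gradg : nat -> 'I_n -> 'rV[R]_m -> 'M[R]_(m, h))
  (kappa kappa1 kappa2 kappa3 : R)
  (phi : 'rV[R]_m -> R) (gradphi : 'rV[R]_m -> 'rV[R]_m)
  (zeta eta : nat -> R)
  (x : nat -> 'I_n -> 'rV[R]_m) (y : nat -> 'I_n -> 'rV[R]_h).

Hypothesis network : network_assumption gamma U E A.
Hypothesis problem : problem_assumption Om f grad2f g gradg kappa kappa1 kappa2 kappa3.
Hypothesis steps : step_sizes zeta eta.
Hypothesis run : algorithm_run Om E A grad2f g gradg phi gradphi zeta eta x y.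

Lemma mixing_weight_ge0 t i j : 0 <= A t i j.
Proof.
have [gamma_gt0 [A_edge [A_nonedge _]]] := network.
case: (boolP (E t j i)) => [/A_edge/andP[gamma_le _] | /A_nonedge ->] //.
exact: le_trans (ltW gamma_gt0) gamma_le.
Qed.

Lemma mixing_row_sum t i : \sum_j A t i j = 1.
Proof. by have [_ [_ [_ [_ [_ [_ /(_ t) [-> _]]]]]]] := network. Qed.

Lemma mixing_sum_over_neighbours k t i (v : 'I_n -> 'rV[R]_k) :
  \sum_(j < n | E t j i) A t i j *: v j = \sum_j A t i j *: v j.
Proof.
have [_ [_ [A_nonedge _]]] := network.
rewrite big_mkcond /=; apply: eq_bigr => j _.
by case: (boolP (E t j i)) => // /A_nonedge ->; rewrite scale0r.
Qed.

Lemma primal_iterate_in_domain t i : Om (x t i).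
Proof.
have [x0_in [_ [x_step _]]] := run.
by case: t => [|t]; [exact: x0_in | exact: (x_step t i).1].
Qed.

Lemma constraint_norm_le t i : enorm (g t i (x t i)) <= kappa2.
Proof.
have [_ [_ [_ [_ [_ [_ [_ [_ [_ [g_le _]]]]]]]]]] := problem.
exact/g_le/primal_iterate_in_domain.
Qed.

Lemma constraint_bound_ge0 (i : 'I_n) : 0 <= kappa2.
Proof. exact: le_trans (sqrtr_ge0 _) (constraint_norm_le 0 i). Qed.

Lemma dual_iterate_norm_le t i : enorm (y t i) <= kappa2.
Proof.
have kappa2_ge0 := constraint_bound_ge0 i.
have [_ [y0 [_ y_step]]] := run.
rewrite enorm_le_sqr //; elim: t i => [|t IH] i.
  rewrite y0 /dotv big1 ?sqr_ge0 // => l _.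
  by rewrite mxE mul0r.
rewrite y_step; apply: le_trans (dotv_pospart_le _) _.
apply: dotv_convex2_bound.
- by have [_ [/(_ t)/andP[/ltW -> ->] _]] := steps.
- rewrite mixing_sum_over_neighbours.
  by apply: dotv_convex_comb_bound IH => [j|]; [exact: mixing_weight_ge0 | exact: mixing_row_sum].
- by rewrite -enorm_le_sqr // constraint_norm_le.
Qed.

End DualIterates.

Theorem lemma3 (R : realType) (n m h : nat) (gamma : R) (U : nat)
    (E : nat -> rel 'I_n) (A : nat -> 'M[R]_n)
    (Om : set 'rV[R]_m)
    (f : nat -> 'I_n -> 'rV[R]_m -> 'rV[R]_m -> R)
    (grad2f : nat -> 'I_n -> 'rV[R]_m -> 'rV[R]_m -> 'rV[R]_m)
    (g : nat -> 'I_n -> 'rV[R]_m -> 'rV[R]_h)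
    (gradg : nat -> 'I_n -> 'rV[R]_m -> 'M[R]_(m, h))
    (kappa kappa1 kappa2 kappa3 : R)
    (phi : 'rV[R]_m -> R) (gradphi : 'rV[R]_m -> 'rV[R]_m) (mu : R)
    (zeta eta : nat -> R)
    (x : nat -> 'I_n -> 'rV[R]_m) (y : nat -> 'I_n -> 'rV[R]_h)
    (T : nat) :
  (2 <= n)%N ->
  network_assumption gamma U E A ->
  problem_assumption Om f grad2f g gradg kappa kappa1 kappa2 kappa3 ->
  mirror_map phi gradphi mu ->
  step_sizes zeta eta ->
  algorithm_run Om E A grad2f g gradg phi gradphi zeta eta x y ->
  forall (i : 'I_n) (t : nat), (1 <= t <= T)%N ->
    enorm (y t i) <= Num.sqrt (n%:R) * kappa2.
Proof.
move=> n_ge2 network problem _ steps run i t _.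
apply: le_trans (dual_iterate_norm_le network problem steps run t i) _.
have sqrt_n_ge1 : 1 <= Num.sqrt (n%:R : R).
  by rewrite -{1}sqrtr1 ler_sqrt // ler1n ltnW.
by rewrite ler_peMl // (constraint_bound_ge0 problem run i).
Qed.
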